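(* Let $m\ge 1$ and let $\mathbf A,\mathbf B\in\mathbb R^{m\times m}$, where $\mathbf A$ is Schur stable (spectral radius $\rho(\mathbf A)<1$). Fix a symmetric positive definite matrix $\mathbf C\in\mathbb R^{m\times m}$ and let $\mathbf H=\mathbf H^T$ be the unique positive definite solution of the discrete Lyapunov equation $\mathbf A^T\mathbf H\mathbf A-\mathbf H=-\mathbf C$. Let $c>0$ be the smallest eigenvalue of $\mathbf C$, and let $0<\underline{\eta}\le\overline{\eta}$ be the smallest and largest eigenvalues of $\mathbf H$. Define $$\alpha:=\begin{cases}\dfrac{\big|\,\overline{\eta}-c+|\mathbf A^T\mathbf H\mathbf B|\,\big|}{\overline{\eta}}, & \text{if } c>|\mathbf A^T\mathbf H\mathbf B|,\\[2mm] \dfrac{\big|\,\underline{\eta}-c+|\mathbf A^T\mathbf H\mathbf B|\,\big|}{\underline{\eta}}, & \text{if } c\le|\mathbf A^T\mathbf H\mathbf B|,\end{cases}\qquad \beta:=\underline{\eta}^{-1}\big(|\mathbf A^T\mathbf H\mathbf B|+|\mathbf B^T\mathbf H\mathbf B|\big).$$ Let $\mathcal T\subset\{1,2,3,\dots\}$ be a nonempty set with $\overline{\tau}:=\max_{\tau\in\mathcal T}\tau<\infty$, and let $\tau:\mathbb Z_{\ge 0}\to\mathcal T$, $t\mapsto\tau_t$, be an arbitrary (deterministic) delay sequence. Consider any sequence $(\mathbf x_t)_{t\ge 0}\subset\mathbb R^m$ with arbitrary initial values $\mathbf x_0,\dots,\mathbf x_{\overline{\tau}}$ satisfying $$\mathbf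 x_{t+1}=\mathbf A\,\mathbf x_t+\mathbf B\,\mathbf x_{t-\tau_t}\qquad\text{for all } t\ge\overline{\tau}.$$ If $\alpha+\beta<1$, then $\mathbf x_t\to 0$ exponentially fast as $t\to\infty$, i.e. there exist constants $M>0$ and $\lambda\in(0,1)$ (independent of $t$) such that $\|\mathbf x_t\|\le M\lambda^{t}\max_{0\le s\le\overline{\tau}}\|\mathbf x_s\|$ for all $t\ge 0$.
   Context: Here $|\cdot|$ applied to a matrix denotes the induced (operator) Euclidean norm, and $|\cdot|$ applied to a real number denotes absolute value. In the paper this is applied to the closed-loop mean dynamics of a linear plant with Kalman filter, LQG feedback and an additional delayed state-feedback ''watermarking'' term, where $\mathbf A$ is the LQG closed-loop matrix and $\mathbf B$ the matrix multiplying the delayed state, but the statement is purely about the delayed linear recursion above. *)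

From mathcomp Require Import all_boot all_order all_algebra.
From mathcomp Require Import classical_sets reals Rstruct complex.
From Stdlib Require Import Rdefinitions.

Set Implicit Arguments.
Unset Strict Implicit.
Unset Printing Implicit Defensive.

Import Order.TTheory GRing.Theory Num.Theory.
Local Open Scope ring_scope.
Local Open Scope classical_set_scope.

Notation R := Rdefinitions.R.

Definition enorm (m : nat) (x : 'cV[R]_m) : R := Num.sqrt (\sum_(i < m) x i 0 ^+ 2).

Definition opnorm (m : nat) (M : 'M[R]_m) : R :=
  sup [set enorm (M *m x) | x in [set x : 'cV[R]_m | enorm x = 1]].

Definition schur_stable (m : nat) (A : 'M[R]_m) : Prop :=
  forall z : R[i], eigenvalue (map_mx (fun r : R => Complex r 0) A) z -> `|z| < 1.

Definition symmetric_mx (m : nat) (M : 'M[R]_m) : Prop := M^T = M.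

Definition pos_def (m : nat) (M : 'M[R]_m) : Prop :=
  symmetric_mx M /\ forall x : 'cV[R]_m, x != 0 -> 0 < (x^T *m M *m x) 0 0.

Definition min_eig (m : nat) (M : 'M[R]_m) (e : R) : Prop :=
  eigenvalue M e /\ forall l, eigenvalue M l -> e <= l.
Definition max_eig (m : nat) (M : 'M[R]_m) (e : R) : Prop :=
  eigenvalue M e /\ forall l, eigenvalue M l -> l <= e.

Definition alpha_coef (c etaL etaU nAHB : R) : R :=
  if nAHB < c then `|etaU - c + nAHB| / etaU else `|etaL - c + nAHB| / etaL.

Definition beta_coef (etaL nAHB nBHB : R) : R := etaL^-1 * (nAHB + nBHB).

Definition init_max (m taubar : nat) (x : nat -> 'cV[R]_m) : R :=
  \big[Num.max/0]_(s < taubar.+1) enorm (x s).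

From mathcomp Require Import all_boot all_order all_algebra.
From mathcomp Require Import classical_sets reals Rstruct complex.
From mathcomp Require Import spectral sesquilinear.
From mathcomp Require Import ring lra.
Import Order.TTheory GRing.Theory Num.Theory Num.Def.
Local Open Scope ring_scope.

(* V(x) = x^T H x is a Lyapunov function for the delayed recursion.  Expanding
   V(A z + B w) with the Lyapunov equation leaves V z - z^T C z plus cross terms,
   which the operator norms and the Rayleigh bounds
   eta_min |x|^2 <= V x <= eta_max |x|^2 turn into
   V(x_{t+1}) <= alpha V(x_t) + beta V(x_{t - tau_t}).
   If alpha + beta <= lam^(taubar+1) with lam < 1, induction on t shows that
   lam^taubar V(x_t) decays like lam^t, and the Rayleigh bounds convert this
   back to |x_t|. *)

Section Norms.
Context {m : nat}.
Implicit Types (x z : 'cV[R]_m) (M N : 'M[R]_m).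

Definition sqnorm x : R := \sum_i x i 0 ^+ 2.

Definition qform M x : R := (x^T *m M *m x) 0 0.

Lemma sqnorm_ge0 x : 0 <= sqnorm x.
Proof. by apply: sumr_ge0 => i _; rewrite sqr_ge0. Qed.

Lemma sqnorm_eq0 x : sqnorm x = 0 -> x = 0.
Proof.
move=> /(psumr_eq0P (fun i _ => sqr_ge0 (x i 0))) x0.
by apply/matrixP => i j; rewrite (ord1 j) mxE; apply/eqP; rewrite -sqrf_eq0 x0.
Qed.

Lemma enorm_ge0 x : 0 <= enorm x.
Proof. exact: sqrtr_ge0. Qed.

Lemma enorm_sq x : enorm x ^+ 2 = sqnorm x.
Proof. by rewrite sqr_sqrtr ?sqnorm_ge0. Qed.

Lemma enorm0 : enorm (0 : 'cV[R]_m) = 0.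
Proof. by rewrite /enorm big1 ?sqrtr0 // => i _; rewrite mxE expr0n. Qed.

Lemma enorm_eq0 x : enorm x = 0 -> x = 0.
Proof. by move=> x0; apply: sqnorm_eq0; rewrite -enorm_sq x0 expr0n. Qed.

Lemma enormZ (k : R) x : enorm (k *: x) = `|k| * enorm x.
Proof.
rewrite /enorm -sqrtr_sqr -sqrtrM ?sqr_ge0 // mulr_sumr.
by congr Num.sqrt; apply: eq_bigr => i _; rewrite mxE exprMn.
Qed.

Lemma norm_entry_le_enorm x i : `|x i 0| <= enorm x.
Proof.
rewrite -sqrtr_sqr ler_sqrt ?sqnorm_ge0 // (bigD1 i) //= lerDl.
by apply: sumr_ge0 => j _; rewrite sqr_ge0.
Qed.

Lemma dot_sqnorm_le x z s : 0 < s ->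
  2 * (x^T *m z) 0 0 <= s * sqnorm x + sqnorm z / s.
Proof.
move=> s_gt0.
have sVgt0 : 0 < s^-1 by rewrite invr_gt0.
have sum_sq : 0 <= s ^+ 2 * sqnorm x - 2 * s * (x^T *m z) 0 0 + sqnorm z.
  have -> : s ^+ 2 * sqnorm x - 2 * s * (x^T *m z) 0 0 + sqnorm z
      = \sum_i (s * x i 0 - z i 0) ^+ 2.
    rewrite mxE /sqnorm !mulr_sumr -sumrN -!big_split /=.
    by apply: eq_bigr => i _; rewrite mxE; ring.
  by apply: sumr_ge0 => i _; rewrite sqr_ge0.
have := mulr_ge0 sum_sq (ltW sVgt0).
have sV : s * s^-1 = 1 by rewrite mulfV ?gt_eqF.
have -> : (s ^+ 2 * sqnorm x - 2 * s * (x^T *m z) 0 0 + sqnorm z) * s^-1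
   = (s * sqnorm x - 2 * (x^T *m z) 0 0) * (s * s^-1) + sqnorm z / s by ring.
rewrite sV; lra.
Qed.

End Norms.

Section OperatorNorm.
Context {m : nat}.
Implicit Types (x y : 'cV[R]_m) (N : 'M[R]_m).

Lemma has_sup_opnorm N x0 : enorm x0 = 1 ->
  has_sup [set enorm (N *m x) | x in [set x : 'cV[R]_m | enorm x = 1]].
Proof.
move=> x0_unit; split; first by exists (enorm (N *m x0)); exists x0.
pose rowsum i := \sum_j `|N i j|.
exists (Num.sqrt (\sum_i rowsum i ^+ 2)) => _ [x x_unit <-].
rewrite ler_sqrt; last by apply: sumr_ge0 => i _; rewrite sqr_ge0.
apply: ler_sum => i _.
have Nx_le : `|(N *m x) i 0| <= rowsum i.
  rewrite mxE; apply: le_trans (ler_norm_sum _ _ _) _.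
  apply: ler_sum => j _; rewrite normrM -[leRHS]mulr1 ler_wpM2l //.
  by rewrite -x_unit norm_entry_le_enorm.
have := normr_ge0 ((N *m x) i 0).
rewrite -real_normK ?num_real //; nra.
Qed.

Lemma enorm_mulmx_le N x : enorm (N *m x) <= opnorm N * enorm x.
Proof.
have [->|x_neq0] := eqVneq x 0; first by rewrite mulmx0 enorm0 mulr0.
have nx_gt0 : 0 < enorm x.
  by rewrite lt_def enorm_ge0 andbT; apply: contra x_neq0 => /eqP/enorm_eq0->.
pose u := (enorm x)^-1 *: x.
have u_unit : enorm u = 1 by rewrite enormZ gtr0_norm ?invr_gt0 // mulVf ?gt_eqF.
have /ubP Nu_le := sup_upper_bound (has_sup_opnorm N u u_unit).
have : enorm (N *m u) <= opnorm N by apply: Nu_le; exists u.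
rewrite /u -scalemxAr enormZ gtr0_norm ?invr_gt0 //.
by rewrite -(ler_pM2l nx_gt0) mulrA mulfV ?gt_eqF // mul1r mulrC.
Qed.

Lemma opnorm_ge0 N : (0 < m)%N -> 0 <= opnorm N.
Proof.
move=> m_gt0; pose e := delta_mx (Ordinal m_gt0) (0 : 'I_1) : 'cV[R]_m.
have e_unit : enorm e = 1.
  rewrite /enorm (bigD1 (Ordinal m_gt0)) //= big1 ?addr0 ?mxE ?eqxx ?expr1n ?sqrtr1 //.
  by move=> i /negbTE i_neq; rewrite mxE i_neq expr0n.
have := enorm_mulmx_le N e; rewrite e_unit mulr1 => Ne_le.
exact: le_trans (enorm_ge0 _) Ne_le.
Qed.

Lemma cross_le_opnorm N x y : (0 < m)%N ->
  2 * (x^T *m N *m y) 0 0 <= opnorm N * (sqnorm x + sqnorm y).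
Proof.
move=> m_gt0; have n_ge0 := opnorm_ge0 N m_gt0.
have Ny_le := enorm_mulmx_le N y.
set n := opnorm N in n_ge0 Ny_le *; set z := N *m y in Ny_le.
have z_le : sqnorm z <= n ^+ 2 * sqnorm y.
  by rewrite -!enorm_sq -exprMn; have := enorm_ge0 z; nra.
rewrite -mulmxA -/z.
have [n0|n_neq0] := eqVneq n 0.
  have /sqnorm_eq0 -> : sqnorm z = 0.
    by apply/le_anti; rewrite sqnorm_ge0 andbT; move: z_le; rewrite n0 expr0n mul0r.
  by rewrite mulmx0 mxE n0 !mul0r mulr0.
have n_gt0 : 0 < n by rewrite lt_def n_neq0.
apply: le_trans (dot_sqnorm_le x z _ n_gt0) _.
rewrite mulrDr lerD2l ler_pdivrMr //.
by have -> : n * sqnorm y * n = n ^+ 2 * sqnorm y by ring.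
Qed.

End OperatorNorm.

Lemma real_complex_norm2 (z : R[i]) :
  real_complex R (complex.Re z ^+ 2 + complex.Im z ^+ 2) = conjC z * z.
Proof.
by case: z => a b; apply/eqP; rewrite eq_complex /=; apply/andP; split; apply/eqP; ring.
Qed.

Section RayleighBounds.
Context {m : nat} {M : 'M[R]_m} (M_sym : M^T = M).

Local Open Scope sesquilinear_scope.
Local Notation fC := (real_complex R).
Local Notation MC := (map_mx fC M).
Local Notation P := (spectralmx MC).
Local Notation D := (spectral_diag MC).

Lemma hermitian_map_real_complex : MC \is hermsymmx.
Proof.
apply/is_hermitianmxP; rewrite expr0 scale1r.
by apply/matrixP => i j; rewrite !mxE -{1}M_sym mxE; apply/esym/conjc_real.
Qed.

Let MC_herm := hermitian_map_real_complex.

Lemma spectral_diag_real i : D 0 i = fC (complex.Re (D 0 i)).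
Proof.
by rewrite RRe_real //; apply: (mxOverP (hermitian_spectral_diag_real MC_herm)).
Qed.

Lemma eigenvalue_spectral_diag i : eigenvalue M (complex.Re (D 0 i)).
Proof.
have PMC : P *m MC = diag_mx D *m P.
  have /orthomx_spectralP MC_eq := hermitian_normalmx MC_herm.
  by rewrite [X in P *m X]MC_eq !mulmxA mulmxV ?spectral_unit // mul1mx.
have : eigenvalue MC (D 0 i).
  apply/eigenvalueP; exists (row i P).
    by rewrite -row_mul PMC mul_diag_mx; apply/rowP => j; rewrite !mxE.
  apply/eqP => /(congr1 (fun v => (v *m invmx P) 0 i)).
  rewrite -row_mul mulmxV ?spectral_unit // mul0mx !mxE eqxx => /eqP.
  by rewrite oner_eq0.
by rewrite spectral_diag_real !eigenvalue_root_char -map_char_poly fmorph_root.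
Qed.

(* With y := P x, both |x|^2 and x^T M x become weighted sums over the
   weights |y_i|^2, since P is unitary and diagonalises M. *)
Lemma qform_spectral x : exists w : 'I_m -> R,
  [/\ forall i, 0 <= w i, \sum_i w i = sqnorm x
    & qform M x = \sum_i complex.Re (D 0 i) * w i].
Proof.
pose xc := map_mx fC x; pose y := P *m xc.
exists (fun i => complex.Re (y i 0) ^+ 2 + complex.Im (y i 0) ^+ 2).
have xcT : xc ^t conjC = xc^T.
  by apply/matrixP => i j; rewrite !mxE; apply: conjc_real.
have yT : y ^t conjC = xc^T *m P ^t conjC by rewrite /y trmx_mul map_mxM xcT.
have PTP : P ^t conjC *m P = 1%:M.
  by rewrite -invmx_unitary ?spectral_unitarymx // mulVmx ?spectral_unit.
have wE i : fC (complex.Re (y i 0) ^+ 2 + complex.Im (y i 0) ^+ 2)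
    = (y ^t conjC) 0 i * y i 0.
  by rewrite real_complex_norm2 [in RHS]mxE [in RHS]mxE.
split=> [i||]; first by rewrite addr_ge0 ?sqr_ge0.
  apply: (@fmorph_inj _ _ fC); rewrite !rmorph_sum /=.
  have -> : \sum_i fC (x i 0 ^+ 2) = (y ^t conjC *m y) 0 0.
    rewrite yT /y -mulmxA (mulmxA (P ^t conjC)) PTP mul1mx !mxE.
    by apply: eq_bigr => i _; rewrite !mxE rmorphXn expr2.
  by rewrite !mxE; apply: eq_bigr => i _; rewrite wE.
apply: (@fmorph_inj _ _ fC); rewrite rmorph_sum /=.
have -> : fC (qform M x) = (y ^t conjC *m diag_mx D *m y) 0 0.
  have /orthomx_spectralP MC_eq := hermitian_normalmx MC_herm.
  have -> : fC (qform M x) = (xc^T *m MC *m xc) 0 0.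
    by rewrite /xc map_trmx -!map_mxM [RHS]mxE.
  by rewrite yT /y [X in _ *m X *m _]MC_eq invmx_unitary ?spectral_unitarymx // !mulmxA.
rewrite mul_mx_diag [LHS]mxE; apply: eq_bigr => i _.
by rewrite rmorphM /= wE -spectral_diag_real !mxE; ring.
Qed.

Lemma min_eig_qform {e : R} : min_eig M e -> forall x, e * sqnorm x <= qform M x.
Proof.
move=> [_ e_min] x; have [w [w_ge0 <- ->]] := qform_spectral x.
rewrite mulr_sumr; apply: ler_sum => i _.
by apply: ler_wpM2r; [apply: w_ge0 | apply/e_min/eigenvalue_spectral_diag].
Qed.

Lemma max_eig_qform {e : R} : max_eig M e -> forall x, qform M x <= e * sqnorm x.
Proof.
move=> [_ e_max] x; have [w [w_ge0 <- ->]] := qform_spectral x.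
rewrite mulr_sumr; apply: ler_sum => i _.
by apply: ler_wpM2r; [apply: w_ge0 | apply/e_max/eigenvalue_spectral_diag].
Qed.

End RayleighBounds.

Lemma eigenvalue_pos_def_gt0 {m} {M : 'M[R]_m} {e : R} :
  pos_def M -> eigenvalue M e -> 0 < e.
Proof.
move=> [_ M_pos] /eigenvalueP [v Mv v_neq0].
have vT_neq0 : v^T != 0.
  by apply: contra v_neq0 => /eqP/(congr1 trmx); rewrite trmxK trmx0 => ->.
have := M_pos _ vT_neq0; rewrite trmxK Mv -scalemxAl mxE.
have : 0 <= (v *m v^T) 0 0.
  by rewrite mxE; apply: sumr_ge0 => i _; rewrite mxE -expr2 sqr_ge0.
nra.
Qed.

Lemma bernoulli_le n (h : R) : 0 <= h <= 1 -> 1 - n%:R * h <= (1 - h) ^+ n.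
Proof.
case/andP=> h_ge0 h_le1; elim: n => [|n IHn]; first by rewrite mul0r subr0 expr0.
have omh_ge0 : 0 <= 1 - h by lra.
have := ler_wpM2r omh_ge0 IHn.
have : 0 <= n%:R * h * h by rewrite !mulr_ge0.
rewrite exprSr -natr1; nra.
Qed.

(* lam := 1 - (1 - q) / (k + 2): by Bernoulli,
   lam^(k+1) >= 1 - (k+1)/(k+2) (1 - q) >= q. *)
Lemma exists_rate_root (q : R) k : 0 <= q < 1 ->
  exists lam : R, 0 < lam < 1 /\ q <= lam ^+ k.+1.
Proof.
case/andP=> q_ge0 q_lt1; pose h := (1 - q) / k.+2%:R.
have k2_gt1 : 1 < k.+2%:R :> R by rewrite ltr1n.
have hk : h * k.+2%:R = 1 - q by rewrite mulfVK // gt_eqF // (lt_trans ltr01).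
have h_gt0 : 0 < h by rewrite divr_gt0 ?subr_gt0 // (lt_trans ltr01).
have h_lt1 : h < 1.
  have : h * 1 < h * k.+2%:R by rewrite ltr_pM2l.
  lra.
have hk1 : k.+1%:R * h <= 1 - q by rewrite -hk mulrC ler_pM2l // ler_nat.
exists (1 - h); split; first by apply/andP; split; lra.
have h01 : 0 <= h <= 1 by apply/andP; split; lra.
have := bernoulli_le k.+1 h h01; lra.
Qed.

Section DelayInequality.
Context {v : nat -> R} {al be M0 lam : R} {taubar : nat} {tau : nat -> nat}.
Hypotheses (al_ge0 : 0 <= al) (be_ge0 : 0 <= be) (M0_ge0 : 0 <= M0).
Hypotheses (lam_gt0 : 0 < lam) (lam_le1 : lam <= 1).
Hypothesis rate : al + be <= lam ^+ taubar.+1.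
Hypothesis tau_le : forall t, (tau t <= taubar)%N.
Hypothesis v_init : forall s, (s <= taubar)%N -> v s <= M0.
Hypothesis v_rec : forall t, (taubar <= t)%N ->
  v t.+1 <= al * v t + be * v (t - tau t)%N.

(* Each step past taubar gains a factor lam^(taubar+1) >= al + be and looks
   back at most taubar steps, so the weight lam^taubar absorbs the delay. *)
Lemma delay_ineq_geometric t : lam ^+ taubar * v t <= M0 * lam ^+ t.
Proof.
have lamX_ge0 n : 0 <= lam ^+ n by rewrite exprn_ge0 ?ltW.
elim/ltn_ind: t => t IH.
have [t_le|t_gt] := leqP t taubar.
  have [vt_le0|vt_gt0] := leP (v t) 0.
    by apply: le_trans (mulr_ge0 M0_ge0 (lamX_ge0 t)); rewrite mulr_ge0_le0.
  apply: le_trans (_ : _ <= lam ^+ t * v t) _.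
    by rewrite ler_pM2r //; apply: ler_wiXn2l => //; apply: ltW.
  by rewrite mulrC ler_wpM2r ?v_init.
case: t IH t_gt => // t IH /ltnSE t_ge.
have past_le s : (s <= t)%N -> (t - taubar <= s)%N ->
    lam ^+ taubar * v s <= M0 * lam ^+ (t - taubar).
  move=> s_le s_ge; apply: le_trans (IH s (leq_ltn_trans s_le (ltnSn t))) _.
  by rewrite ler_wpM2l //; apply: ler_wiXn2l => //; apply: ltW.
have cur := past_le t (leqnn t) (leq_subr _ _).
have del := past_le _ (leq_subr (tau t) t) (leq_sub2l t (tau_le t)).
have lamS : lam ^+ t.+1 = lam ^+ taubar.+1 * lam ^+ (t - taubar).
  by rewrite -exprD addSn subnKC.
have rate' : (al + be) * (M0 * lam ^+ (t - taubar))
    <= lam ^+ taubar.+1 * (M0 * lam ^+ (t - taubar)).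
  by rewrite ler_wpM2r ?mulr_ge0.
have := ler_wpM2l (lamX_ge0 taubar) (v_rec t t_ge).
have := ler_wpM2l al_ge0 cur; have := ler_wpM2l be_ge0 del.
rewrite lamS; lra.
Qed.

End DelayInequality.

Lemma alpha_coef_bound (c etaL etaU n V s : R) :
  0 < etaL -> 0 < etaU -> 0 <= s -> etaL * s <= V -> V <= etaU * s ->
  V + (n - c) * s <= alpha_coef c etaL etaU n * V.
Proof.
move=> etaL_gt0 etaU_gt0 s_ge0 V_lb V_ub.
have V_ge0 : 0 <= V := le_trans (mulr_ge0 (ltW etaL_gt0) s_ge0) V_lb.
have contract e : 0 < e -> (n - c) * s <= (n - c) * (V / e) ->
    V + (n - c) * s <= `|e - c + n| / e * V.
  move=> e_gt0 le_sV; apply: le_trans (_ : V + (n - c) * (V / e) <= _); first lra.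
  have -> : V + (n - c) * (V / e) = (e - c + n) / e * V by field; rewrite gt_eqF.
  apply: (ler_wpM2r V_ge0); apply: ler_wpM2r; first by rewrite invr_ge0 ltW.
  exact: ler_norm.
rewrite /alpha_coef; case: ltP => [n_lt_c|c_le_n]; apply: contract => //.
  apply: ler_wnM2l; first by rewrite subr_le0 ltW.
  by rewrite ler_pdivrMr // mulrC.
apply: ler_wpM2l; first by rewrite subr_ge0.
by rewrite ler_pdivlMr // mulrC.
Qed.

Lemma beta_coef_bound (etaL n b V s : R) : 0 < etaL -> 0 <= n + b ->
  etaL * s <= V -> (n + b) * s <= beta_coef etaL n b * V.
Proof.
move=> etaL_gt0 nb_ge0 V_lb.
have -> : beta_coef etaL n b * V = (n + b) * (V / etaL).
  by rewrite (_ : beta_coef etaL n b = etaL^-1 * (n + b)) //; ring.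
by rewrite ler_wpM2l // ler_pdivlMr // mulrC.
Qed.

Lemma alpha_coef_ge0 {c etaL etaU n : R} :
  0 < etaL -> 0 < etaU -> 0 <= alpha_coef c etaL etaU n.
Proof.
by move=> etaL_gt0 etaU_gt0; rewrite /alpha_coef; case: ifP => _;
  apply: divr_ge0 => //; apply: ltW.
Qed.

Lemma beta_coef_ge0 {etaL n b : R} :
  0 < etaL -> 0 <= n -> 0 <= b -> 0 <= beta_coef etaL n b.
Proof.
by move=> etaL_gt0 n_ge0 b_ge0; rewrite /beta_coef mulr_ge0 ?addr_ge0 // invr_ge0 ltW.
Qed.

Lemma qform_addmx m (A B H : 'M[R]_m) z w : H^T = H ->
  qform H (A *m z + B *m w) = qform (A^T *m H *m A) z
    + 2 * (z^T *m (A^T *m H *m B) *m w) 0 0 + qform (B^T *m H *m B) w.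
Proof.
move=> H_sym.
have addE (P Q : 'M[R]_1) : (P + Q) 0 0 = P 0 0 + Q 0 0 by rewrite mxE.
have trE (P : 'M[R]_1) : P^T 0 0 = P 0 0 by rewrite mxE.
have cross_sym : (w^T *m B^T *m H *m A *m z) 0 0
    = (z^T *m A^T *m H *m B *m w) 0 0.
  by rewrite -trE !trmx_mul !trmxK H_sym !mulmxA.
have trD : (A *m z + B *m w)^T = z^T *m A^T + w^T *m B^T.
  by rewrite raddfD /= !trmx_mul.
rewrite /qform trD !mulmxDl !mulmxDr !mulmxA !addE cross_sym; ring.
Qed.

Section LyapunovStep.
Context {m : nat} {A B C H : 'M[R]_m} {c etaL etaU : R}.
Hypotheses (m_gt0 : (0 < m)%N) (H_sym : H^T = H).
Hypothesis lyap : A^T *m H *m A - H = - C.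
Hypothesis C_lb : forall x, c * sqnorm x <= qform C x.
Hypothesis H_lb : forall x, etaL * sqnorm x <= qform H x.
Hypothesis H_ub : forall x, qform H x <= etaU * sqnorm x.
Hypotheses (etaL_gt0 : 0 < etaL) (etaU_gt0 : 0 < etaU).

Local Notation nAHB := (opnorm (A^T *m H *m B)).
Local Notation nBHB := (opnorm (B^T *m H *m B)).

Lemma qform_delay_step z w : qform H (A *m z + B *m w) <=
  alpha_coef c etaL etaU nAHB * qform H z + beta_coef etaL nAHB nBHB * qform H w.
Proof.
have AHA : A^T *m H *m A = H - C by rewrite -[LHS](subrK H) lyap addrC.
have qAHA : qform (A^T *m H *m A) z = qform H z - qform C z.
  by rewrite AHA /qform mulmxBr mulmxBl [LHS]mxE [X in _ + X]mxE.
have cross := cross_le_opnorm (A^T *m H *m B) z w m_gt0.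
have BHB : 2 * qform (B^T *m H *m B) w <= nBHB * (sqnorm w + sqnorm w).
  exact: cross_le_opnorm.
have n_ge0 := opnorm_ge0 (A^T *m H *m B) m_gt0.
have b_ge0 := opnorm_ge0 (B^T *m H *m B) m_gt0.
have al_part := @alpha_coef_bound c etaL etaU nAHB _ _ etaL_gt0 etaU_gt0
  (sqnorm_ge0 z) (H_lb z) (H_ub z).
have be_part := @beta_coef_bound etaL nAHB nBHB _ _ etaL_gt0
  (addr_ge0 n_ge0 b_ge0) (H_lb w).
have := C_lb z; rewrite qform_addmx // qAHA; lra.
Qed.

End LyapunovStep.

Lemma enorm_le_init_max {m taubar : nat} (x : nat -> 'cV[R]_m) {s : nat} :
  (s <= taubar)%N -> enorm (x s) <= init_max taubar x.
Proof.
move=> s_le; pose i : 'I_taubar.+1 := Ordinal (s_le : s < taubar.+1)%N.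
exact: (le_bigmax 0 (fun s : 'I_taubar.+1 => enorm (x s)) i).
Qed.

Lemma enorm_le_geometric m (x : 'cV[R]_m) (K lam I : R) t :
  0 <= K -> 0 <= lam -> 0 <= I -> sqnorm x <= K * lam ^+ t * I ^+ 2 ->
  enorm x <= Num.sqrt K * Num.sqrt lam ^+ t * I.
Proof.
move=> K_ge0 lam_ge0 I_ge0 x_le.
have r_ge0 : 0 <= Num.sqrt K * Num.sqrt lam ^+ t * I.
  by rewrite !mulr_ge0 ?exprn_ge0 ?sqrtr_ge0.
rewrite -(ger0_norm r_ge0) -sqrtr_sqr ler_sqrt ?sqr_ge0 //.
by rewrite !exprMn -exprM mulnC exprM !sqr_sqrtr.
Qed.

Lemma exp_decay_of_qform_decay {m} {H : 'M[R]_m} {x : nat -> 'cV[R]_m}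
    {etaL etaU lam I : R} {taubar : nat} :
  (forall z, etaL * sqnorm z <= qform H z) -> 0 < etaL -> 0 < etaU ->
  0 < lam < 1 -> 0 <= I ->
  (forall t, lam ^+ taubar * qform H (x t) <= etaU * I ^+ 2 * lam ^+ t) ->
  exists (M mu : R), 0 < M /\ 0 < mu < 1 /\
    forall t, enorm (x t) <= M * mu ^+ t * I.
Proof.
move=> H_lb etaL_gt0 etaU_gt0 /andP [lam_gt0 lam_lt1] I_ge0 V_geo.
have lamX_gt0 : 0 < lam ^+ taubar by rewrite exprn_gt0.
pose K := etaU / (etaL * lam ^+ taubar).
have K_gt0 : 0 < K by rewrite divr_gt0 ?mulr_gt0.
exists (Num.sqrt K), (Num.sqrt lam); split; [|split].
- by rewrite sqrtr_gt0.
- by rewrite sqrtr_gt0 lam_gt0 -sqrtr1 ltr_sqrt.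
move=> t; apply: enorm_le_geometric; [exact: ltW | exact: ltW | exact: I_ge0 |].
have -> : K * lam ^+ t * I ^+ 2 = etaU * I ^+ 2 * lam ^+ t / (etaL * lam ^+ taubar).
  by rewrite /K; ring.
rewrite ler_pdivlMr ?mulr_gt0 //.
have := ler_wpM2l (ltW lamX_gt0) (H_lb (x t)); have := V_geo t; lra.
Qed.

Theorem theorem1 (m : nat) (hm : (0 < m)%N) (A B C H : 'M[R]_m)
  (hA : schur_stable A)
  (hC : pos_def C)
  (hH : pos_def H)
  (hLyap : A^T *m H *m A - H = - C)
  (c etaL etaU : R)
  (hc : min_eig C c) (hetaL : min_eig H etaL) (hetaU : max_eig H etaU)
  (T : pred nat) (taubar : nat)
  (hT : forall s, T s -> (1 <= s <= taubar)%N) (hTmax : T taubar)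
  (hab : alpha_coef c etaL etaU (opnorm (A^T *m H *m B))
         + beta_coef etaL (opnorm (A^T *m H *m B)) (opnorm (B^T *m H *m B)) < 1) :
  forall (tau : nat -> nat), (forall t, T (tau t)) ->
  forall x : nat -> 'cV[R]_m,
    (forall t, (taubar <= t)%N -> x t.+1 = A *m x t + B *m x (t - tau t)%N) ->
    exists (M lam : R), 0 < M /\ 0 < lam < 1 /\
      forall t, enorm (x t) <= M * lam ^+ t * init_max taubar x.
Proof.
move=> tau tauT x x_rec.
have [[H_sym _] [C_sym _]] := (hH, hC).
have etaL_gt0 := eigenvalue_pos_def_gt0 hH hetaL.1.
have etaU_gt0 : 0 < etaU := lt_le_trans etaL_gt0 (hetaL.2 _ hetaU.1).
have H_lb := min_eig_qform H_sym hetaL; have H_ub := max_eig_qform H_sym hetaU.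
have n_ge0 := opnorm_ge0 (A^T *m H *m B) hm.
have b_ge0 := opnorm_ge0 (B^T *m H *m B) hm.
set al := alpha_coef _ _ _ _ in hab; set be := beta_coef _ _ _ in hab.
have al_ge0 : 0 <= al := alpha_coef_ge0 etaL_gt0 etaU_gt0.
have be_ge0 : 0 <= be := beta_coef_ge0 etaL_gt0 n_ge0 b_ge0.
have ab01 : 0 <= al + be < 1 by rewrite addr_ge0.
have [lam [lam01 rate]] := exists_rate_root (al + be) taubar ab01.
set I := init_max taubar x.
have I_ge0 : 0 <= I := le_trans (enorm_ge0 _) (enorm_le_init_max x (leq0n taubar)).
have V_init s : (s <= taubar)%N -> qform H (x s) <= etaU * I ^+ 2.
  move=> s_le; apply: le_trans (H_ub _) _; apply: ler_wpM2l; first exact: ltW.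
  rewrite -enorm_sq lerXn2r ?nnegrE ?enorm_ge0 //; exact: enorm_le_init_max.
have V_rec t : (taubar <= t)%N -> qform H (x t.+1)
    <= al * qform H (x t) + be * qform H (x (t - tau t)%N).
  move=> t_ge; rewrite x_rec //.
  exact: (qform_delay_step hm H_sym hLyap (min_eig_qform C_sym hc)).
have tau_le t : (tau t <= taubar)%N by case/andP: (hT _ (tauT t)).
have [lam_gt0 lam_lt1] := andP lam01.
apply: (exp_decay_of_qform_decay H_lb etaL_gt0 etaU_gt0 lam01 I_ge0).
exact: delay_ineq_geometric al_ge0 be_ge0 (mulr_ge0 (ltW etaU_gt0) (sqr_ge0 I))
  lam_gt0 (ltW lam_lt1) rate tau_le V_init V_rec.
Qed.
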